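(* Let $p\in(0,1/2)$ and $x>2$. Let $(\xi_n)_{n\geq1}$ be i.i.d. with $\mathbf{P}(\xi_1=1)=p=1-\mathbf{P}(\xi_1=-1)$ and let $\mathcal{F}_n:=\sigma(\xi_1,\dots,\xi_n)$. Set $W_0:=x$, $B_1:=1$, $W_n:=W_{n-1}+\xi_nB_n$, $B_{n+1}:=B_n2^{\xi_n}$ for $n\geq1$, and $X_n:=W_n/B_{n+1}-2$ for $n\in\mathbb{N}$ (so $X_0=x-2$). Let $$R:=\max\left\{2,\ \frac{2p}{(1-2p)\log2}+1\right\}.$$ (i) The process defined by $M_0:=0$ and $$M_n:=\sum_{j=1}^n\left(\log X_j-\log X_{j-1}-\left(\tfrac12-p\right)\log2\right)\mathbf{1}_{\{X_{j-1}\geq R\}},\quad n\geq1,$$ is a submartingale with respect to $(\mathcal{F}_n)$ and satisfies $|M_n-M_{n-1}|\leq(5\log2)/2$ for all $n\geq1$. (ii) For $k\geq1$ let $T_k:=\#\{1\leq j\leq k: X_j\geq R\}$. There exist positive constants $C$ and $\beta$, independent of $x$, $p$ and $k$, such that for all $k\geq1$, $$\mathbf{P}\left(T_k>\tfrac{3k}{4},\ X_n\leq0\text{ for some }n\geq k\right)\leq\frac{C}{(1-2p)^2}e^{-\beta(1-2p)^3k}.$$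
   Context: The summand in $M_n$ is interpreted as $0$ when $X_{j-1}<R$; when $X_{j-1}\geq R$ one has $X_j>0$ so the logarithms are defined. *)

From HB Require Import structures.
From mathcomp Require Import all_boot all_order all_algebra.
From mathcomp Require Import all_classical all_reals all_analysis.
Set Implicit Arguments. Unset Strict Implicit. Unset Printing Implicit Defensive.
Import Order.TTheory GRing.Theory Num.Theory.
Import numFieldNormedType.Exports.
Local Open Scope classical_set_scope.
Local Open Scope ring_scope.

Section Defs.
Context {R : realType} {d : measure_display} {T : measurableType d}.

(* (xi n)_{n >= 1} is an i.i.d. sequence with P(xi_n = 1) = p = 1 - P(xi_n = -1);
   xi 0 is unused. *)
Definition iid_pm1 (P : probability T R) (p : R) (xi : nat -> T -> R) : Prop :=
  [/\ (forall n, (0 < n)%N -> measurable_fun setT (xi n)),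
      (forall n w, (0 < n)%N -> xi n w = 1 \/ xi n w = -1),
      (forall n, (0 < n)%N -> P (xi n @^-1` [set 1]) = p%:E),
      (forall n, (0 < n)%N -> P (xi n @^-1` [set -1]) = (1 - p)%:E) &
      (forall (I : seq nat) (B : nat -> set R),
          all (fun i => 0 < i)%N I -> uniq I -> (forall i, measurable (B i)) ->
          P (\big[setI/setT]_(i <- I) (xi i @^-1` B i))
          = (\prod_(i <- I) P (xi i @^-1` B i))%E)].

(* Bs n = B_{n+1}: B_1 = 1, B_{n+1} = B_n 2^{xi_n} *)
Fixpoint Bs (xi : nat -> T -> R) (n : nat) (w : T) : R :=
  match n with
  | 0 => 1
  | m.+1 => Bs xi m w * (2 `^ (xi m.+1 w))
  end.

Fixpoint W (x : R) (xi : nat -> T -> R) (n : nat) (w : T) : R :=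
  match n with
  | 0 => x
  | m.+1 => W x xi m w + xi m.+1 w * Bs xi m w
  end.

Definition X (x : R) (xi : nat -> T -> R) (n : nat) (w : T) : R :=
  W x xi n w / Bs xi n w - 2.

Definition Rthr (p : R) : R :=
  Num.max 2 (2 * p / ((1 - 2 * p) * ln 2) + 1).

Definition Mproc (p x : R) (xi : nat -> T -> R) (n : nat) (w : T) : R :=
  \sum_(1 <= j < n.+1)
    (if Rthr p <= X x xi j.-1 w
     then ln (X x xi j w) - ln (X x xi j.-1 w) - (2^-1 - p) * ln 2
     else 0).

Definition natF (xi : nat -> T -> R) (n : nat) : set (set T) :=
  <<s [set A | exists i, (1 <= i <= n)%N /\
               exists B, measurable B /\ A = xi i @^-1` B] >>.

Definition Tcount (p x : R) (xi : nat -> T -> R) (k : nat) (w : T) : nat :=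
  \sum_(1 <= j < k.+1) nat_of_bool (Rthr p <= X x xi j w)%R.

End Defs.

(* Submartingale w.r.t. a filtration F of sub-sigma-algebras: adapted,
   integrable, and E[M_{n+1} | F_n] >= M_n, expressed (conditional expectation
   is not in the library) by its defining property
   E[M_{n+1} 1_A] >= E[M_n 1_A] for every A in F_n. *)
Definition submartingale {R : realType} {d : measure_display} {T : measurableType d}
  (P : probability T R) (F : nat -> set (set T)) (M : nat -> T -> R) : Prop :=
  [/\ (forall n (B : set R), measurable B -> F n (M n @^-1` B)),
      (forall n, P.-integrable setT (EFin \o M n)) &
      (forall n (A : set T), F n A ->
         (\int[P]_(w in A) (M n w)%:E <= \int[P]_(w in A) (M n.+1 w)%:E)%E)].

(* Given the signs of xi_1, ..., xi_n, the process X evolves deterministically: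
   X -> (X - 1) / 2 after xi = 1 and X -> 2 X after xi = -1.  Hence every event of F_n
   is a finite union of cylinders {(xi_1, ..., xi_n) = s}, of probability
   p^#(+1) (1 - p)^#(-1), and expectations are finite sums over sign sequences.
   (i) From X >= R, ln X gains ln 2 with probability 1 - p and loses
   ln 2 + ln (X / (X - 1)) <= ln 2 + 1 / (X - 1) with probability p; the choice of R
   makes the conditional drift at least (1/2 - p) ln 2.
   (ii) With theta = (1 - 2p) / (32 ln 2) and delta = (1 - 2p)^2 / 128,
   Z_n = exp (- theta L_n + delta V_n) is a supermartingale, where L_n sums the
   increments of ln X made from above R and V_n counts them.  L_n telescopes to at most
   ln (max X_n R) - ln R, which vanishes once X_n <= 0, while V_n >= T_k - 1 > 3k/4 - 1
   for n >= k.  Markov's inequality bounds each event {T_k > 3k/4, X_n <= 0} by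
   exp (delta - 3 delta k / 4), and these events increase with n since X stays
   nonpositive once it is. *)

From HB Require Import structures.
From mathcomp Require Import all_boot all_order all_algebra.
From mathcomp Require Import all_classical all_reals all_analysis.
From mathcomp Require Import ring lra.
Import Order.TTheory GRing.Theory Num.Theory.
Import numFieldNormedType.Exports.
Set Implicit Arguments. Unset Strict Implicit. Unset Printing Implicit Defensive.
Local Open Scope classical_set_scope.
Local Open Scope ring_scope.

Fixpoint bool_seqs (n : nat) : seq (seq bool) :=
  if n is m.+1 then [seq rcons s b | s <- bool_seqs m, b <- [:: true; false]]
  else [:: [::]].

Lemma mem_bool_seqs n s : (s \in bool_seqs n) = (size s == n).
Proof.
elim: n s => [|n IH] s; first by rewrite inE; case: s.
apply/allpairsPdep/idP => [[s' [b [s'n _ ->]]]|].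
  by rewrite size_rcons eqSS -IH.
case/lastP: s => [//|s b]; rewrite size_rcons eqSS -IH => sn.
by exists s, b; split => //; case: b.
Qed.

Lemma uniq_bool_seqs n : uniq (bool_seqs n).
Proof.
elim: n => [//|n IH] /=.
apply: (@allpairs_uniq _ _ _ (@rcons bool) (bool_seqs n) [:: true; false]) => //.
by move=> [s1 b1] [s2 b2] _ _ /= /eqP; rewrite eqseq_rcons => /andP[/eqP-> /eqP->].
Qed.

Lemma big_bool_seqsS (R : Type) (idx : R) (op : Monoid.law idx) n (F : seq bool -> R) :
  \big[op/idx]_(s <- bool_seqs n.+1) F s =
  \big[op/idx]_(s <- bool_seqs n) op (F (rcons s true)) (F (rcons s false)).
Proof.
rewrite big_allpairs_dep; apply: eq_bigr => s _.
by rewrite big_cons big_seq1.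
Qed.

Lemma sum_shift_le (b : nat -> bool) k n : (k <= n)%N ->
  (\sum_(1 <= j < k.+1) b j <= \sum_(0 <= j < n) b j + 1)%N.
Proof.
move=> kn; rewrite (@big_cat_nat _ _ _ k 0 n) //=.
apply: (@leq_trans (\sum_(0 <= j < k.+1) b j)).
  by rewrite big_add1 big_nat_recl //= leq_addl.
by rewrite big_nat_recr //= -addnA leq_add2l (leq_trans (leq_b1 _)) // leq_addl.
Qed.

Section paths.
Variable R : realType.
Implicit Types (p y : R) (e : nat -> bool) (s : seq bool).

Definition Xstep (b : bool) y : R := if b then (y - 1) / 2 else 2 * y.

Fixpoint Xpath x0 e (n : nat) : R :=
  if n is m.+1 then Xstep (e m) (Xpath x0 e m) else x0.

Lemma eq_Xpath x0 e e' n :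
  (forall i, (i < n)%N -> e i = e' i) -> Xpath x0 e n = Xpath x0 e' n.
Proof.
elim: n => [//|n IH] ee' /=.
by rewrite ee' // IH // => i lt_in; apply: ee'; exact: ltnW.
Qed.

Lemma Xpath_rcons x0 s b n :
  (n <= size s)%N -> Xpath x0 (nth false (rcons s b)) n = Xpath x0 (nth false s) n.
Proof.
move=> ns; apply: eq_Xpath => i lt_in.
by rewrite nth_rcons (leq_trans lt_in ns).
Qed.

Lemma Xpath_le0_after x0 e n m :
  Xpath x0 e n <= 0 -> (n <= m)%N -> Xpath x0 e m <= 0.
Proof.
move=> Xn0; elim: m => [|m IH]; first by rewrite leqn0 => /eqP en; rewrite -en.
rewrite leq_eqVlt => /orP[/eqP <- //|]; rewrite ltnS => /IH Xm0 /=.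
by rewrite /Xstep; case: (e m); lra.
Qed.

Definition path_sum (f : R -> bool -> R) x0 e (n : nat) : R :=
  \sum_(j < n) f (Xpath x0 e j) (e j).

Lemma path_sum_rcons f x0 s b :
  path_sum f x0 (nth false (rcons s b)) (size s).+1 =
  path_sum f x0 (nth false s) (size s) + f (Xpath x0 (nth false s) (size s)) b.
Proof.
rewrite /path_sum big_ord_recr /= Xpath_rcons // nth_rcons ltnn eqxx.
congr (_ + _); apply: eq_bigr => j _.
by rewrite Xpath_rcons 1?ltnW // nth_rcons ltn_ord.
Qed.

Definition bern_weight p s : R := \prod_(b <- s) (if b then p else 1 - p).

Lemma bern_weight_rcons p s b :
  bern_weight p (rcons s b) = bern_weight p s * (if b then p else 1 - p).
Proof. by rewrite /bern_weight -cats1 big_cat big_seq1. Qed.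

Lemma bern_weight_ge0 p s : 0 <= p <= 1 -> 0 <= bern_weight p s.
Proof.
by move=> /andP[p0 p1]; apply: prodr_ge0 => -[] _ //; rewrite subr_ge0.
Qed.

Lemma bern_markov p n (S : pred (seq bool)) (G : seq bool -> R) (K : R) :
  0 <= p <= 1 -> 0 < K -> (forall s, 0 <= G s) -> (forall s, S s -> K <= G s) ->
  \sum_(s <- bool_seqs n | S s) bern_weight p s <=
  K^-1 * \sum_(s <- bool_seqs n) bern_weight p s * G s.
Proof.
move=> p01 K0 G0 KG; rewrite mulr_sumr big_mkcond /=; apply: ler_sum => s _.
have W0 := bern_weight_ge0 s p01.
case: ifP => [/KG KGs|_]; last by rewrite !mulr_ge0 ?invr_ge0 // ltW.
by rewrite mulrCA ler_peMr // ler_pdivlMl // mulr1.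
Qed.

Section bernoulli_paths.
Variables (p : R) (f : R -> bool -> R).
Hypothesis p01 : 0 <= p <= 1.

Lemma path_sum_submartingale x0 n (S : pred (seq bool)) :
  (forall y, 0 <= p * f y true + (1 - p) * f y false) ->
  \sum_(s <- bool_seqs n | S s) path_sum f x0 (nth false s) n * bern_weight p s <=
  \sum_(s <- bool_seqs n.+1 | S (take n s))
     path_sum f x0 (nth false s) n.+1 * bern_weight p s.
Proof.
move=> f_sub; rewrite [leRHS]big_mkcond [leLHS]big_mkcond big_bool_seqsS /=.
rewrite big_seq [leRHS]big_seq; apply: ler_sum => s; rewrite mem_bool_seqs => /eqP <-.
rewrite -!cats1 !take_size_cat // !cats1; case: (S s); last by rewrite addr0.
rewrite !path_sum_rcons !bern_weight_rcons.
set F := path_sum _ _ _ _; set W := bern_weight p s; set y := Xpath _ _ _.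
have W0 : 0 <= W by exact: bern_weight_ge0.
have -> : (F + f y true) * (W * p) + (F + f y false) * (W * (1 - p)) =
  F * W + W * (p * f y true + (1 - p) * f y false) by ring.
by rewrite lerDl mulr_ge0.
Qed.

Lemma expR_path_sum_supermartingale x0 n :
  (forall y, p * expR (f y true) + (1 - p) * expR (f y false) <= 1) ->
  \sum_(s <- bool_seqs n) bern_weight p s * expR (path_sum f x0 (nth false s) n) <= 1.
Proof.
move=> f_super; elim: n => [|n IH].
  by rewrite big_seq1 /bern_weight /path_sum big_nil big_ord0 expR0 mulr1.
rewrite big_bool_seqsS (le_trans _ IH) // big_seq [leRHS]big_seq.
apply: ler_sum => s; rewrite mem_bool_seqs => /eqP <- /=.
rewrite !path_sum_rcons !bern_weight_rcons !expRD.
set E := expR (path_sum _ _ _ _); set W := bern_weight p s; set y := Xpath _ _ _.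
have WE0 : 0 <= W * E by rewrite mulr_ge0 ?expR_ge0 ?bern_weight_ge0.
have -> : W * p * (E * expR (f y true)) + W * (1 - p) * (E * expR (f y false)) =
  W * E * (p * expR (f y true) + (1 - p) * expR (f y false)) by ring.
by rewrite ler_piMr.
Qed.

End bernoulli_paths.
End paths.

Section estimates.
Variable R : realType.
Implicit Types (p y : R) (b : bool).
Local Notation L := (ln (2 : R)).

Lemma ln2_gt0 : 0 < L.
Proof. by rewrite ln_gt0 // ltr1n. Qed.

Lemma expR_mul1B_le1 (t : R) : expR t * (1 - t) <= 1.
Proof.
have E : expR t * expR (- t) = 1 by rewrite -expRD subrr expR0.
by rewrite -[leRHS]E ler_wpM2l ?expR_ge0 // expR_ge1Dx.
Qed.

Lemma expRN_le_quad (a : R) : 0 <= a -> expR (- a) <= 1 - a + a ^+ 2.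
Proof.
move=> a0; have := expR_mul1B_le1 (- a); have := expR_gt0 (- a).
rewrite opprK; nra.
Qed.

Lemma expR_le_quad (b : R) : 0 <= b <= 2^-1 -> expR b <= 1 + b + 2 * b ^+ 2.
Proof.
move=> /andP[b0 b1]; have := expR_mul1B_le1 b; have := expR_gt0 b.
have : 0 <= b * b * (1 - 2 * b) by rewrite !mulr_ge0 // subr_ge0; lra.
nra.
Qed.

Lemma Rthr_ge2 p : 2 <= Rthr p.
Proof. by rewrite /Rthr le_max lexx. Qed.

Lemma Rthr_ge_ratio p : 2 * p / ((1 - 2 * p) * L) + 1 <= Rthr p.
Proof. by rewrite /Rthr le_max lexx orbT. Qed.

Definition log_gap y : R := ln y - ln (y - 1).

Lemma ln_Xstep_false y : 0 < y -> ln (Xstep false y) - ln y = L.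
Proof. by move=> y0; rewrite /Xstep lnM ?posrE // addrK. Qed.

Lemma ln_Xstep_true y : 1 < y -> ln (Xstep true y) - ln y = - (L + log_gap y).
Proof.
move=> y1; rewrite /Xstep lnM ?posrE ?invr_gt0 ?subr_gt0 // lnV ?posrE //.
by rewrite /log_gap; ring.
Qed.

Lemma log_gap_ge0 y : 1 < y -> 0 <= log_gap y.
Proof.
by move=> y1; rewrite subr_ge0 ler_ln ?posrE ?subr_gt0 ?gerBl //; lra.
Qed.

Lemma log_gap_le_ln2 y : 2 <= y -> log_gap y <= L.
Proof.
move=> y2; rewrite lerBlDl -lnM ?posrE ?subr_gt0 //; try lra.
by rewrite ler_ln ?posrE ?mulr_gt0 ?subr_gt0 //; lra.
Qed.

(* The threshold [Rthr p] is chosen for this: [log_gap y <= 1 / (y - 1)] and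
   [y - 1 >= 2p / ((1 - 2p) ln 2)]. *)
Lemma log_gap_drift p y : 0 < p < 2^-1 -> Rthr p <= y ->
  p * log_gap y <= (1 - 2 * p) * L / 2.
Proof.
move=> /andP[p0 p1] Ry; have y2 := le_trans (Rthr_ge2 p) Ry.
have y1 : 0 < y - 1 by lra.
have eL : 0 < (1 - 2 * p) * L by rewrite mulr_gt0 ?ln2_gt0 //; lra.
have gap_le : log_gap y <= (y - 1)^-1.
  have E : y = (y - 1) * (1 + (y - 1)^-1) by rewrite mulrDr mulr1 mulfV ?gt_eqF ?subrK.
  have inv0 : 0 < (y - 1)^-1 by rewrite invr_gt0.
  have pos : 0 < 1 + (y - 1)^-1 by lra.
  rewrite /log_gap {1}E lnM ?posrE // addrC addKr le_ln1Dx //; lra.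
have p_le : p <= (1 - 2 * p) * L / 2 * (y - 1).
  have := le_trans (Rthr_ge_ratio p) Ry; rewrite -lerBrDr ler_pdivrMr // => h.
  nra.
apply: (le_trans (ler_wpM2l (ltW p0) gap_le)).
by rewrite ler_pdivrMr.
Qed.

Definition log_incr p y b : R :=
  if Rthr p <= y then ln (Xstep b y) - ln y else 0.

Definition visit p y (b : bool) : R := if Rthr p <= y then 1 else 0.

Definition Mincr p y b : R := log_incr p y b - (2^-1 - p) * L * visit p y b.

Lemma MincrE p y b : Mincr p y b =
  if Rthr p <= y then ln (Xstep b y) - ln y - (2^-1 - p) * L else 0.
Proof.
by rewrite /Mincr /log_incr /visit; case: ifP => _; rewrite ?mulr1 ?mulr0 ?subr0.
Qed.

Lemma Mincr_norm_le p y b : 0 < p < 2^-1 -> `|Mincr p y b| <= 5 * L / 2.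
Proof.
move=> /andP[p0 p1]; have L0 := ln2_gt0.
rewrite MincrE; case: ifP => Ry; last by rewrite normr0; lra.
have y2 := le_trans (Rthr_ge2 p) Ry; have y1 : 1 < y by lra.
have := log_gap_ge0 y1; have := log_gap_le_ln2 y2.
have : 0 <= (2^-1 - p) * L <= L / 2 by apply/andP; split; nra.
rewrite ler_norml; case: b; rewrite ?ln_Xstep_true ?ln_Xstep_false //; lra.
Qed.

Lemma Mincr_drift_ge0 p y : 0 < p < 2^-1 ->
  0 <= p * Mincr p y true + (1 - p) * Mincr p y false.
Proof.
move=> p01; rewrite !MincrE; case: ifP => Ry; last by rewrite !mulr0 addr0.
have y2 := le_trans (Rthr_ge2 p) Ry.
rewrite ln_Xstep_true ?ln_Xstep_false; try lra.
have := log_gap_drift p01 Ry; lra.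
Qed.

Definition theta p : R := (1 - 2 * p) / (32 * L).
Definition delta p : R := (1 - 2 * p) ^+ 2 / 128.

Lemma theta_ge0 p : p < 2^-1 -> 0 <= theta p.
Proof. by move=> p1; rewrite divr_ge0 ?mulr_ge0 ?ltW ?ln2_gt0 //; lra. Qed.

Lemma delta_ge0 p : 0 <= delta p.
Proof. by rewrite divr_ge0 ?sqr_ge0. Qed.

Definition logZ_incr p y b : R := - theta p * log_incr p y b + delta p * visit p y b.

(* Second order Taylor bounds; [a] and [b] stand for the exponents [theta p * ln 2] and
   [theta p * (ln 2 + log_gap y)] of the two moves from [y >= Rthr p]. *)
Lemma expR_mix_le p (a b : R) : 0 < p < 2^-1 -> a = (1 - 2 * p) / 32 ->
  a <= b <= 2 * a -> p * b <= p * a + (1 - 2 * p) * a / 2 ->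
  p * expR b + (1 - p) * expR (- a) <= 1 - delta p.
Proof.
move=> /andP[p0 p1] aE /andP[ab b2a] pb.
have a0 : 0 <= a by rewrite aE; lra.
have Ea := expRN_le_quad a0.
have Eb : expR b <= 1 + b + 2 * b ^+ 2
  by apply: expR_le_quad; rewrite aE in b2a; apply/andP; split; lra.
have h1 : p * expR b <= p * (1 + b + 2 * b ^+ 2) by rewrite ler_wpM2l // ltW.
have h2 : (1 - p) * expR (- a) <= (1 - p) * (1 - a + a ^+ 2) by rewrite ler_wpM2l //; lra.
have h3 : p * b ^+ 2 <= p * (4 * a ^+ 2).
  rewrite ler_wpM2l ?(ltW p0) // (_ : 4 * a ^+ 2 = (2 * a) ^+ 2); last by ring.
  by rewrite ler_sqr ?nnegrE //; lra.
have h4 : p * a ^+ 2 <= 2^-1 * a ^+ 2 by rewrite ler_wpM2r ?sqr_ge0 // ltW.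
have h5 : a ^+ 2 = (1 - 2 * p) * a / 32 by rewrite expr2 {1}aE; lra.
have -> : delta p = (1 - 2 * p) * a / 4 by rewrite /delta aE; lra.
nra.
Qed.

Lemma expR_logZ_incr_super p y : 0 < p < 2^-1 ->
  p * expR (logZ_incr p y true) + (1 - p) * expR (logZ_incr p y false) <= 1.
Proof.
move=> p01; move: (p01) => /andP[p0 p1]; have L0 := ln2_gt0.
rewrite /logZ_incr /log_incr /visit; case: ifP => Ry; last first.
  by rewrite !mulr0 addr0 expR0 !mulr1 addrC subrK.
have y2 := le_trans (Rthr_ge2 p) Ry; have y1 : 1 < y by lra.
rewrite ln_Xstep_true // ln_Xstep_false; last lra.
rewrite !mulr1 !expRD.
set a := theta p * L; set b := theta p * (L + log_gap y).
have th0 := theta_ge0 p1.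
have gap0 := log_gap_ge0 y1; have gapL := log_gap_le_ln2 y2.
have mix : p * expR b + (1 - p) * expR (- a) <= 1 - delta p.
  apply: expR_mix_le => //.
  - by rewrite /a /theta; field; rewrite gt_eqF.
  - by rewrite /a /b; apply/andP; split; nra.
  - have := ler_wpM2l th0 (log_gap_drift p01 Ry); rewrite /a /b; nra.
have -> : - theta p * - (L + log_gap y) = b by rewrite mulrNN.
have -> : - theta p * L = - a by rewrite mulNr.
have := expR_mul1B_le1 (delta p); have := expR_ge0 (delta p); nra.
Qed.

Lemma path_sum_logZ_incr p x0 e n : path_sum (logZ_incr p) x0 e n =
  - theta p * path_sum (log_incr p) x0 e n + delta p * path_sum (visit p) x0 e n.
Proof. by rewrite /path_sum big_split /= -!mulr_sumr. Qed.

Lemma path_sum_visit p x0 e n :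
  path_sum (visit p) x0 e n = (\sum_(0 <= j < n) nat_of_bool (Rthr p <= Xpath x0 e j)%R)%:R.
Proof. by rewrite big_mkord natr_sum; apply: eq_bigr => j _; rewrite /visit; case: ifP. Qed.

Lemma path_sum_log_incr_le p x0 e n :
  path_sum (log_incr p) x0 e n <= ln (Num.max (Xpath x0 e n) (Rthr p)) - ln (Rthr p).
Proof.
have R2 := Rthr_ge2 p; have R0 : 0 < Rthr p by lra.
have le_max_R y : Rthr p <= Num.max y (Rthr p) by rewrite le_max lexx orbT.
have max0 y : 0 < Num.max y (Rthr p) := lt_le_trans R0 (le_max_R y).
elim: n => [|n IH]; first by rewrite /path_sum big_ord0 subr_ge0 ler_ln ?posrE.
rewrite /path_sum big_ord_recr /= -/(path_sum _ _ _ n) /log_incr.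
set y := Xpath x0 e n; case: ifP => Ry; last first.
  rewrite addr0 (le_trans IH) // lerB // ler_ln ?posrE //.
  by rewrite (max_idPr _) ?le_max_R // ltW // ltNge Ry.
have Xstep0 : 0 < Xstep (e n) y by rewrite /Xstep; case: (e n); lra.
rewrite (max_idPl Ry) in IH.
have : ln (Xstep (e n) y) <= ln (Num.max (Xstep (e n) y) (Rthr p)).
  by rewrite ler_ln ?posrE // le_max lexx.
lra.
Qed.

Lemma expR_delta_tail p (k : nat) : 0 < p < 2^-1 ->
  expR (delta p - delta p * (3 * k%:R / 4)) <=
  2 / (1 - 2 * p) ^+ 2 * expR (- (3 / 512 * (1 - 2 * p) ^+ 3 * k%:R)).
Proof.
move=> /andP[p0 p1]; have e0 : 0 < 1 - 2 * p by lra.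
have e1 : 1 - 2 * p <= 1 by lra.
rewrite /delta; set e := 1 - 2 * p in e0 e1 *.
have e2 : e ^+ 2 <= 1 by rewrite expr_le1 // ltW.
have e20 : 0 < e ^+ 2 by rewrite exprn_gt0.
rewrite expRD ler_pM ?expR_ge0 //.
  have ed : expR (e ^+ 2 / 128) <= 2.
    have := expR_mul1B_le1 (e ^+ 2 / 128); have := expR_ge0 (e ^+ 2 / 128); nra.
  by apply: (le_trans ed); rewrite ler_pdivlMr //; nra.
rewrite ler_expR lerN2.
have e32 : e ^+ 3 <= e ^+ 2 by rewrite exprS ger_pMl // ltW.
have k0 : 0 <= (k%:R : R) by [].
nra.
Qed.

End estimates.

Lemma trivIset_fibers (I J : Type) (f : I -> J) (D : set J) :
  trivIset D (fun s => [set w | f w = s]).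
Proof. by move=> s t _ _ [w [/= <- <-]]. Qed.

Section sign_sequences.
Variable R : realType.
Variables (d : measure_display) (T : measurableType d) (P : probability T R).
Variables (p : R) (xi : nat -> T -> R).
Hypothesis xi_iid : iid_pm1 P p xi.

(* [up w i] is the sign of [xi i.+1]: the paper's steps are indexed from 1. *)
Definition up (w : T) (i : nat) : bool := xi i.+1 w == 1.

Definition signs (n : nat) (w : T) : seq bool := mkseq (up w) n.

Definition sign_val (b : bool) : R := if b then 1 else -1.

Lemma sign_val_inj : injective sign_val.
Proof. by case; case => //= h; exfalso; lra. Qed.

Lemma xi_up i w : xi i.+1 w = sign_val (up w i).
Proof.
case: xi_iid => _ xi_pm1 _ _ _; rewrite /up /sign_val.
have [-> | ->] := xi_pm1 i.+1 w erefl; first by rewrite eqxx.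
by rewrite ifF //; apply/eqP; lra.
Qed.

Lemma nth_signs n w i : (i < n)%N -> nth false (signs n w) i = up w i.
Proof. exact: nth_mkseq. Qed.

Lemma size_signs n w : size (signs n w) = n.
Proof. exact: size_mkseq. Qed.

Lemma signs_take n w : signs n w = take n (signs n.+1 w).
Proof. by rewrite /signs mkseqS -cats1 take_size_cat // size_mkseq. Qed.

Definition signs_pred n (A : set T) : pred (seq bool) :=
  fun s => `[< exists w, A w /\ signs n w = s >].

Lemma signs_predE n (A : set T) :
  (forall w w', signs n w = signs n w' -> A w -> A w') ->
  A = [set w | signs_pred n A (signs n w)].
Proof.
move=> detA; apply/seteqP; split => w /=; rewrite asboolE; first by exists w.
by move=> [w' [Aw' ww']]; exact: detA ww' Aw'.
Qed.

Lemma signs_atomE n s : size s = n -> [set w | signs n w = s] =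
  \big[setI/setT]_(i <- iota 1 n) xi i @^-1` [set sign_val (nth false s i.-1)].
Proof.
move=> sn; rewrite -bigcap_seq; apply/seteqP; split => w /=.
  move=> <- i; rewrite /= mem_iota => /andP[]; case: i => // i _.
  by rewrite add1n ltnS => lt_in; rewrite xi_up nth_signs.
move=> xi_w; apply: (@eq_from_nth _ false); first by rewrite size_signs sn.
move=> i; rewrite size_signs => lt_in; rewrite nth_signs //.
apply: sign_val_inj; rewrite -xi_up; apply: (xi_w i.+1).
by rewrite /= mem_iota add1n ltnS.
Qed.

Lemma measurable_xi_preimage i (B : set R) :
  (0 < i)%N -> measurable B -> measurable (xi i @^-1` B).
Proof. by case: xi_iid => mxi _ _ _ _ i0 mB; rewrite -[_ @^-1` _]setTI; apply: mxi. Qed.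

Lemma measurable_signs_atom n s : measurable [set w | signs n w = s].
Proof.
have [sn|sn] := eqVneq (size s) n.
  rewrite signs_atomE // big_seq; apply: bigsetI_measurable => i.
  by rewrite mem_iota => /andP[i1 _]; exact: measurable_xi_preimage.
suff -> : [set w | signs n w = s] = set0 by [].
by apply/seteqP; split => w //= sw; move: sn; rewrite -sw size_signs eqxx.
Qed.

Lemma P_signs_atom n s : size s = n -> P [set w | signs n w = s] = (bern_weight p s)%:E.
Proof.
move=> sn; case: xi_iid => _ _ P_up P_down indep.
rewrite signs_atomE // indep; last 3 first.
- by apply/allP => i; rewrite mem_iota => /andP[].
- exact: iota_uniq.
- by move=> i; exact: measurable_set1.
rewrite /bern_weight -prodEFin -[in RHS](mkseq_nth false s) sn /mkseq big_map.
rewrite (iotaDl 1 0 n) big_map; apply: eq_bigr => i _.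
by rewrite add1n /=; case: (nth false s i); [exact: P_up | exact: P_down].
Qed.

Lemma signs_eventE n (S : pred (seq bool)) : [set w | S (signs n w)] =
  \big[setU/set0]_(s <- bool_seqs n | S s) [set w | signs n w = s].
Proof.
rewrite -bigcup_seq_cond; apply/seteqP; split => [w Sw|w [s /andP[_ Ss] /= ->] //].
by exists (signs n w) => //=; rewrite Sw mem_bool_seqs size_signs eqxx.
Qed.

Lemma measurable_signs_event n (S : pred (seq bool)) :
  measurable [set w | S (signs n w)].
Proof.
by rewrite signs_eventE; apply: bigsetU_measurable => s _; exact: measurable_signs_atom.
Qed.

Lemma measurable_fun_signs n (F : seq bool -> R) : measurable_fun setT (F \o signs n).
Proof.
move=> _ Y mY; rewrite setTI.
have -> : (F \o signs n) @^-1` Y = [set w | `[< Y (F (signs n w)) >]].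
  by apply/seteqP; split => w /=; rewrite asboolE.
exact: (measurable_signs_event n (fun s => `[< Y (F s) >])).
Qed.

Lemma integral_signs_event n (S : pred (seq bool)) (F : seq bool -> R) :
  (\int[P]_(w in [set w | S (signs n w)]) (F (signs n w))%:E =
   (\sum_(s <- bool_seqs n | S s) F s * bern_weight p s)%:E)%E.
Proof.
rewrite signs_eventE -big_filter integral_bigsetU_EFin; last 4 first.
- by move=> s; exact: measurable_signs_atom.
- exact/filter_uniq/uniq_bool_seqs.
- exact: trivIset_fibers.
- apply/measurable_realfun.measurable_EFinP; apply: measurable_funTS.
  exact: measurable_fun_signs.
rewrite big_filter -sumEFin big_seq_cond [in RHS]big_seq_cond.
apply: eq_bigr => s /andP[]; rewrite mem_bool_seqs => /eqP sn _.
rewrite (eq_integral (cst (F s)%:E)); last by move=> w /[!inE] /= ->.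
rewrite integral_cst; last exact: measurable_signs_atom.
transitivity ((F s)%:E * (bern_weight p s)%:E)%E; last by [].
by congr (_ * _)%E; exact: P_signs_atom.
Qed.

Lemma P_signs_event n (S : pred (seq bool)) :
  P [set w | S (signs n w)] = (\sum_(s <- bool_seqs n | S s) bern_weight p s)%:E.
Proof.
have := integral_signs_event n S (fun=> 1).
rewrite integral_cst; last exact: measurable_signs_event.
by rewrite mul1e => ->; under eq_bigr do rewrite mul1r.
Qed.

End sign_sequences.

Section natural_filtration.
Variable R : realType.
Variables (d : measure_display) (T : measurableType d) (P : probability T R).
Variables (p : R) (xi : nat -> T -> R).
Hypothesis xi_iid : iid_pm1 P p xi.

(* [natF xi n] is [<<s natF_gen n>>], i.e. the measurable sets of
   [g_sigma_algebraType (natF_gen n)], whose closure lemmas thus apply to it. *)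
Definition natF_gen n : set (set T) :=
  [set A | exists i, (1 <= i <= n)%N /\ exists B, measurable B /\ A = xi i @^-1` B].

Lemma natF_signs_event n (S : pred (seq bool)) : natF xi n [set w | S (signs xi n w)].
Proof.
rewrite (signs_eventE xi) big_seq_cond.
apply: (@bigsetU_measurable _ (g_sigma_algebraType (natF_gen n))) => s /andP[].
rewrite mem_bool_seqs => /eqP sn _; rewrite (signs_atomE xi_iid sn) big_seq.
apply: bigsetI_measurable => i; rewrite mem_iota add1n ltnS => /andP[i1 i_n].
apply: sub_gen_smallest; exists i; split; first by rewrite i1.
by exists [set sign_val R (nth false s i.-1)]; split => //; exact: measurable_set1.
Qed.

Lemma natF_signs_determined n A w w' :
  natF xi n A -> signs xi n w = signs xi n w' -> A w -> A w'.
Proof.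
move=> FA; move: w w'.
suff : natF xi n `<=` [set B | forall w w', signs xi n w = signs xi n w' -> B w -> B w'].
  by move/(_ A FA).
apply: smallest_sub.
  split => [w w' _ //|B sB w w' ww' [_ nBw]|F sF w w' ww' [k _ Fk]].
  - by split => // Bw'; apply: nBw; exact: sB w' w (esym ww') Bw'.
  - by exists k => //; exact: sF k w w' ww' Fk.
move=> _ [[|i] [/andP[i1 i_n] [B [_ ->]]]] // w w' ww' /=.
by rewrite !(xi_up xi_iid) -!(nth_signs xi _ i_n) ww'.
Qed.

Lemma natF_signs_predE n A : natF xi n A -> A = [set w | signs_pred xi n A (signs xi n w)].
Proof. by move=> FA; apply: signs_predE => w w'; exact: natF_signs_determined. Qed.

End natural_filtration.

Section process.
Variable R : realType.
Variables (d : measure_display) (T : measurableType d) (P : probability T R).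
Variables (p x : R) (xi : nat -> T -> R).
Hypothesis xi_iid : iid_pm1 P p xi.
Hypothesis p_range : 0 < p < 2^-1.
Local Notation x0 := (x - 2).

Let p01 : 0 <= p <= 1.
Proof. by case/andP: p_range => p0 p1; apply/andP; split; lra. Qed.

Lemma Bs_gt0 n w : 0 < Bs xi n w.
Proof. by elim: n => [|n IH] /=; rewrite ?ltr01 // mulr_gt0 // powR_gt0. Qed.

Lemma X_Xpath n w : X x xi n w = Xpath x0 (up xi w) n.
Proof.
elim: n => [|n IH]; first by rewrite /X /= divr1.
rewrite /= -IH /X /= (xi_up xi_iid) /up /Xstep /sign_val.
have B0 := Bs_gt0 n w; case: eqP => _.
  by rewrite powRr1 ?ler0n //; field; rewrite gt_eqF.
by rewrite powR_inv1 ?ler0n //; field; rewrite gt_eqF.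
Qed.

Lemma Xpath_signs n m w : (m <= n)%N ->
  Xpath x0 (nth false (signs xi n w)) m = Xpath x0 (up xi w) m.
Proof. by move=> mn; apply: eq_Xpath => i im; rewrite nth_signs // (leq_trans im mn). Qed.

Lemma X_signs_determined n m w w' : (m <= n)%N ->
  signs xi n w = signs xi n w' -> X x xi m w = X x xi m w'.
Proof.
by move=> mn ww'; rewrite !X_Xpath -(Xpath_signs w mn) -(Xpath_signs w' mn) ww'.
Qed.

Lemma path_sum_signs f n w :
  path_sum f x0 (nth false (signs xi n w)) n = path_sum f x0 (up xi w) n.
Proof.
apply: eq_bigr => j _; rewrite Xpath_signs 1?ltnW // nth_signs //.
Qed.

Lemma Mproc_path_sum n w :
  Mproc p x xi n w = path_sum (Mincr p) x0 (nth false (signs xi n w)) n.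
Proof.
rewrite path_sum_signs /Mproc big_add1 /= big_mkord.
by apply: eq_bigr => j _; rewrite MincrE !X_Xpath.
Qed.

Lemma Mproc_increment n w :
  Mproc p x xi n.+1 w = Mproc p x xi n w + Mincr p (Xpath x0 (up xi w) n) (up xi w n).
Proof. by rewrite !Mproc_path_sum !path_sum_signs /path_sum big_ord_recr. Qed.

Lemma Mproc_norm_le n w : `|Mproc p x xi n w| <= n%:R * (5 * ln 2 / 2).
Proof.
rewrite Mproc_path_sum; apply: (le_trans (ler_norm_sum _ _ _)).
have -> : n%:R * (5 * ln 2 / 2) = \sum_(j < n) (5 * ln 2 / 2 : R).
  by rewrite sumr_const card_ord mulr_natl.
by apply: ler_sum => j _; exact: Mincr_norm_le.
Qed.

Lemma Mproc_signs n : Mproc p x xi n =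
  (fun s => path_sum (Mincr p) x0 (nth false s) n) \o signs xi n.
Proof. by apply/funext => w; rewrite Mproc_path_sum. Qed.

Lemma Mproc_adapted n (B : set R) : natF xi n (Mproc p x xi n @^-1` B).
Proof.
have -> : Mproc p x xi n @^-1` B =
    [set w | `[< B (path_sum (Mincr p) x0 (nth false (signs xi n w)) n) >]].
  by apply/seteqP; split => w /=; rewrite asboolE Mproc_path_sum.
exact: (natF_signs_event xi_iid
  (fun s => `[< B (path_sum (Mincr p) x0 (nth false s) n) >])).
Qed.

Lemma Mproc_integrable n : P.-integrable setT (EFin \o Mproc p x xi n).
Proof.
have L0 := ln2_gt0 R.
apply: (le_integrable (g := EFin \o cst (n%:R * (5 * ln 2 / 2))) measurableT).
- apply/measurable_realfun.measurable_EFinP; rewrite Mproc_signs.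
  exact: (measurable_fun_signs xi_iid).
- move=> w _ /=; rewrite lee_fin (ger0_norm (_ : 0 <= _ * _)) ?Mproc_norm_le //.
  by rewrite mulr_ge0 //; lra.
- exact: finite_measure_integrable_cst.
Qed.

Lemma integral_Mproc n (S : pred (seq bool)) :
  (\int[P]_(w in [set w | S (signs xi n w)]) (Mproc p x xi n w)%:E =
   (\sum_(s <- bool_seqs n | S s)
      path_sum (Mincr p) x0 (nth false s) n * bern_weight p s)%:E)%E.
Proof.
rewrite -(integral_signs_event xi_iid); apply: eq_integral => w _.
by rewrite Mproc_path_sum.
Qed.

Lemma Mproc_submartingale_step n A : natF xi n A ->
  (\int[P]_(w in A) (Mproc p x xi n w)%:E <= \int[P]_(w in A) (Mproc p x xi n.+1 w)%:E)%E.
Proof.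
move=> /(natF_signs_predE xi_iid) ->; set S := signs_pred xi n A; rewrite integral_Mproc.
have -> : [set w | S (signs xi n w)] = [set w | (S \o take n) (signs xi n.+1 w)].
  by apply/seteqP; split => w /=; rewrite -signs_take.
rewrite integral_Mproc lee_fin path_sum_submartingale //.
by move=> y; exact: Mincr_drift_ge0.
Qed.

Lemma Mproc_submartingale : submartingale P (natF xi) (Mproc p x xi).
Proof.
split => [n B _|n|n A]; [exact: Mproc_adapted | exact: Mproc_integrable |].
exact: Mproc_submartingale_step.
Qed.

Lemma Tcount_le_visits k n w : (k <= n)%N ->
  (Tcount p x xi k w)%:R <= path_sum (visit p) x0 (up xi w) n + 1.
Proof.
move=> kn; rewrite path_sum_visit natr1 ler_nat -addn1 /Tcount.
under eq_bigr do rewrite X_Xpath.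
exact: sum_shift_le.
Qed.

Lemma path_sum_logZ_incr_ge k n w : (k <= n)%N ->
  3 * (k%:R : R) / 4 < (Tcount p x xi k w)%:R -> X x xi n w <= 0 ->
  delta p * (3 * k%:R / 4 - 1) <= path_sum (logZ_incr p) x0 (up xi w) n.
Proof.
move=> kn Tk Xn0; rewrite path_sum_logZ_incr.
have gain_le0 : path_sum (log_incr p) x0 (up xi w) n <= 0.
  have := path_sum_log_incr_le p x0 (up xi w) n.
  by rewrite -X_Xpath (max_idPr _) ?subrr // (le_trans Xn0) // (le_trans _ (Rthr_ge2 p)).
have visits := Tcount_le_visits w kn.
have : 0 <= - theta p * path_sum (log_incr p) x0 (up xi w) n.
  by rewrite mulNr oppr_ge0 mulr_ge0_le0 // theta_ge0 //; case/andP: p_range.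
have : delta p * (3 * k%:R / 4 - 1) <= delta p * path_sum (visit p) x0 (up xi w) n.
  by rewrite ler_wpM2l ?delta_ge0 //; lra.
lra.
Qed.

Definition ruin_at k n : set T :=
  [set w | 3 * (k%:R : R) / 4 < (Tcount p x xi k w)%:R /\ X x xi n w <= 0].

Lemma ruin_at_signsE k n : (k <= n)%N ->
  ruin_at k n = [set w | signs_pred xi n (ruin_at k n) (signs xi n w)].
Proof.
move=> kn; apply: signs_predE => w w' ww' [Tk Xn0].
split; last by rewrite -(X_signs_determined _ ww').
suff <- : Tcount p x xi k w = Tcount p x xi k w' by [].
apply: eq_big_nat => j /andP[_ jk]; rewrite (X_signs_determined _ ww') //.
by rewrite (leq_trans _ kn) // -ltnS.
Qed.

Lemma measurable_ruin_at k n : (k <= n)%N -> measurable (ruin_at k n).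
Proof. by move=> kn; rewrite ruin_at_signsE //; exact: (measurable_signs_event xi_iid). Qed.

(* Markov's inequality for the supermartingale [expR (path_sum (logZ_incr p) ...)]. *)
Lemma P_ruin_at_le k n : (k <= n)%N ->
  (P (ruin_at k n) <= (expR (delta p - delta p * (3 * k%:R / 4)))%:E)%E.
Proof.
move=> kn; rewrite ruin_at_signsE // (P_signs_event xi_iid) lee_fin.
set K := expR (delta p * (3 * k%:R / 4 - 1)).
have -> : expR (delta p - delta p * (3 * k%:R / 4)) = K^-1.
  by rewrite -expRN; congr expR; ring.
apply: (le_trans (@bern_markov _ p n _
  (fun s => expR (path_sum (logZ_incr p) x0 (nth false s) n)) K p01 (expR_gt0 _) _ _)).
- by move=> s; exact: expR_ge0.
- move=> s /asboolP [w [[Tk Xn0] <-]]; rewrite path_sum_signs ler_expR.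
  exact: path_sum_logZ_incr_ge.
rewrite -[leRHS]mulr1 ler_wpM2l ?invr_ge0 ?expR_ge0 //.
by apply: (expR_path_sum_supermartingale p01) => y; exact: expR_logZ_incr_super.
Qed.

Lemma P_ruin_after_le k :
  (P [set w | (3 * (k%:R : R) / 4 < (Tcount p x xi k w)%:R)%R /\
              exists n : nat, (k <= n)%N /\ (X x xi n w <= 0)%R]
   <= (expR (delta p - delta p * (3 * k%:R / 4)))%:E)%E.
Proof.
set F := fun i => ruin_at k (k + i).
have -> : [set w | (3 * (k%:R : R) / 4 < (Tcount p x xi k w)%:R)%R /\
              exists n : nat, (k <= n)%N /\ (X x xi n w <= 0)%R] = \bigcup_i F i.
  apply/seteqP; split => w /=.
    by move=> [Tk [n [kn Xn0]]]; exists (n - k)%N => //; rewrite /F /ruin_at /= subnKC.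
  by move=> [i _ [Tk Xn0]]; split => //; exists (k + i)%N; rewrite leq_addr.
have mF i : measurable (F i) by apply: measurable_ruin_at; rewrite leq_addr.
have F_nd : nondecreasing_seq F.
  move=> i j ij; rewrite subsetEset => w [Tk Xi0]; split => //.
  rewrite X_Xpath in Xi0; rewrite X_Xpath.
  by apply: Xpath_le0_after Xi0 _; rewrite leq_add2l.
have cvgF := @nondecreasing_cvg_mu _ _ R P F mF (bigcupT_measurable F mF) F_nd.
rewrite -(cvg_lim _ cvgF) //; apply: lime_le; first by apply/cvg_ex; eexists; exact: cvgF.
by apply: nearW => i /=; apply: P_ruin_at_le; rewrite leq_addr.
Qed.

End process.

Theorem lemma3p2 (R : realType) :
  (* (i) *)
  (forall (d : measure_display) (T : measurableType d) (P : probability T R)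
          (p x : R) (xi : nat -> T -> R),
      0 < p -> p < 2^-1 -> 2 < x -> iid_pm1 P p xi ->
      submartingale P (natF xi) (Mproc p x xi) /\
      (forall n w, (1 <= n)%N ->
         `|Mproc p x xi n w - Mproc p x xi n.-1 w| <= 5 * ln 2 / 2)) /\
  (* (ii) *)
  (exists C beta : R, 0 < C /\ 0 < beta /\
    forall (d : measure_display) (T : measurableType d) (P : probability T R)
           (p x : R) (xi : nat -> T -> R),
      0 < p -> p < 2^-1 -> 2 < x -> iid_pm1 P p xi ->
      forall k : nat, (1 <= k)%N ->
        (P [set w | (3 * (k%:R : R) / 4 < (Tcount p x xi k w)%:R)%R /\
                    exists n : nat, (k <= n)%N /\ (X x xi n w <= 0)%R]
         <= (C / (1 - 2 * p) ^+ 2 * expR (- (beta * (1 - 2 * p) ^+ 3 * k%:R)))%R%:E)%E).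
Proof.
split=> [d T P p x xi p0 p1 _ xi_iid|].
  have p_range : 0 < p < 2^-1 by rewrite p0 p1.
  split; first exact: Mproc_submartingale.
  case=> [//|n] w _; rewrite (Mproc_increment x xi_iid) addrC addKr.
  exact: Mincr_norm_le.
exists 2, (3 / 512); split; first by rewrite ltr0n.
split=> [|d T P p x xi p0 p1 _ xi_iid k _]; first by rewrite divr_gt0 ?ltr0n.
have p_range : 0 < p < 2^-1 by rewrite p0 p1.
apply: le_trans (P_ruin_after_le x xi_iid p_range k) _.
by rewrite lee_fin expR_delta_tail.
Qed.
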